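(* For a graph $G$, $\gamma_{(2,1,0)}(G)=3$ if and only if $\gamma_{\times2}(G)=\gamma(G)+1=3$.
   Context: All graphs are finite and simple; $N(v)$ is the open neighbourhood and $N[v]=N(v)\cup\{v\}$. $\gamma_{(2,1,0)}(G)$ is the minimum of $\sum_v f(v)$ over functions $f:V(G)\to\{0,1,2\}$ such that $\sum_{u\in N(v)}f(u)\ge2$ whenever $f(v)=0$ and $\sum_{u\in N(v)}f(u)\ge1$ whenever $f(v)=1$. $\gamma(G)$ is the domination number and $\gamma_{\times2}(G)$ is the minimum size of $D\subseteq V(G)$ with $|N[v]\cap D|\ge2$ for every $v\in V(G)$ (defined when $G$ has no isolated vertex). *)

(* A finite simple graph on vertex type T : finType is a
   symmetric irreflexive relation e : rel T. *)
From mathcomp Require Import all_boot all_order.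
Set Implicit Arguments. Unset Strict Implicit. Unset Printing Implicit Defensive.

Section Graphs.
Variables (T : finType) (e : rel T).

Definition nbh (v : T) : {set T} := [set u | e v u].
Definition cnbh (v : T) : {set T} := v |: nbh v.

Definition no_isolated : Prop := forall v : T, exists u, e v u.

Definition is_210dom (f : {ffun T -> 'I_3}) : bool :=
  [forall v, ((nat_of_ord (f v) == 0) ==> (2 <= \sum_(u in nbh v) nat_of_ord (f u)))
          && ((nat_of_ord (f v) == 1) ==> (1 <= \sum_(u in nbh v) nat_of_ord (f u)))].

Definition weight (f : {ffun T -> 'I_3}) : nat := \sum_v nat_of_ord (f v).

(* minimum weight; the constant-2 function is always admissible with weight
   2 * #|T|, so the default value 2 * #|T| does not affect the minimum *)
Definition gamma210 : nat :=
  \big[minn/(2 * #|T|)]_(f : {ffun T -> 'I_3} | is_210dom f) weight f.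

Definition dominating (D : {set T}) : bool :=
  [forall v, (cnbh v :&: D) != set0].

(* domination number; setT is always dominating *)
Definition gamma : nat := \big[minn/#|T|]_(D : {set T} | dominating D) #|D|.

Definition double_dominating (D : {set T}) : bool :=
  [forall v, 2 <= #|cnbh v :&: D|].

(* double domination number; meaningful when there is no isolated vertex,
   in which case setT is double dominating, so the default #|T| is harmless *)
Definition gamma_x2 : nat :=
  \big[minn/#|T|]_(D : {set T} | double_dominating D) #|D|.

End Graphs.

From mathcomp Require Import all_boot all_order.
From mathcomp Require Import zify.
Set Implicit Arguments. Unset Strict Implicit. Unset Printing Implicit Defensive.
Import Order.TTheory.

(* The condition defining a (2,1,0)-dominating function f says exactly that
   every closed neighbourhood N[v] carries weight at least 2.  Hence twice the
   indicator of a dominating set and the indicator of a double dominating set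
   are (2,1,0)-dominating, giving γ_{210} <= 2γ and γ_{210} <= γ_{×2}; removing
   a vertex from a double dominating set leaves a dominating set, so
   γ < γ_{×2}.  Conversely, let f be a minimum (2,1,0)-function of weight at
   most 3.  If f(a) = 2, then a vertex v outside N[a] would give
   f(a) + f(N[v]) >= 4, so {a} dominates and γ <= 1; otherwise f is the
   indicator of a double dominating set and γ_{×2} <= γ_{210}.  Either side of
   the equivalence now forces γ = 2 and γ_{210} = γ_{×2} = 3. *)

Section Domination.
Variables (T : finType) (e : rel T).
Hypothesis e_irr : irreflexive e.

Lemma v_notin_nbh (v : T) : v \notin nbh e v.
Proof. by rewrite inE e_irr. Qed.

Lemma sum_cnbh (F : T -> nat) (v : T) :
  \sum_(u in cnbh e v) F u = F v + \sum_(u in nbh e v) F u.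
Proof. exact/big_setU1/v_notin_nbh. Qed.

Lemma is_210domE (f : {ffun T -> 'I_3}) :
  is_210dom e f = [forall v, 2 <= \sum_(u in cnbh e v) f u].
Proof.
apply: eq_forallb => v; rewrite sum_cnbh.
by case: (f v) => [[|[|[|k]]] ?] //=; rewrite ?andbT //; lia.
Qed.

Definition scaled_indicator (k : 'I_3) (D : {set T}) : {ffun T -> 'I_3} :=
  [ffun u => if u \in D then k else ord0].

Lemma sum_scaled_indicator (k : 'I_3) (D A : {set T}) :
  \sum_(u in A) scaled_indicator k D u = k * #|A :&: D|.
Proof.
rewrite mulnC -sum_nat_const big_mkcond [RHS]big_mkcond /=.
apply: eq_bigr => u _; rewrite ffunE inE.
by case: (u \in A); case: (u \in D).
Qed.

Lemma weight_scaled_indicator (k : 'I_3) (D : {set T}) :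
  weight (scaled_indicator k D) = k * #|D|.
Proof.
by rewrite -[in RHS](setTI D) -sum_scaled_indicator; apply: eq_bigl => u; rewrite inE.
Qed.

Lemma is_210dom_scaled_indicator (k : 'I_3) (D : {set T}) :
  is_210dom e (scaled_indicator k D) = [forall v, 2 <= k * #|cnbh e v :&: D|].
Proof.
by rewrite is_210domE; apply: eq_forallb => v; rewrite sum_scaled_indicator.
Qed.

Lemma dominating_is_210dom (D : {set T}) :
  dominating e D -> is_210dom e (scaled_indicator (Ordinal (isT : 2 < 3)) D).
Proof.
move/forallP => domD; rewrite is_210dom_scaled_indicator.
by apply/forallP => v /=; have := domD v; rewrite -card_gt0; lia.
Qed.

Lemma is_210dom_indicator (D : {set T}) :
  is_210dom e (scaled_indicator (Ordinal (isT : 1 < 3)) D) = double_dominating e D.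
Proof.
by rewrite is_210dom_scaled_indicator; apply: eq_forallb => v; rewrite mul1n.
Qed.

Lemma scaled_indicator_support (f : {ffun T -> 'I_3}) :
  (forall v, f v <= 1) ->
  f = scaled_indicator (Ordinal (isT : 1 < 3)) [set v | 0 < f v].
Proof.
move=> f_le1; apply/ffunP => v; apply: val_inj; rewrite ffunE inE.
by have := f_le1 v; case: (f v) => [[|[|k]] ?].
Qed.

Lemma dominating_set1 (f : {ffun T -> 'I_3}) (a : T) :
  is_210dom e f -> f a = 2 :> nat -> weight f <= 3 -> dominating e [set a].
Proof.
rewrite is_210domE => /forallP f_dom fa2 w3; apply/forallP => v.
apply/set0Pn; exists a; rewrite in_setI set11 andbT; apply/negPn/negP => a_far.
have : f a + \sum_(u in cnbh e v) f u <= weight f.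
  by rewrite -(big_setU1 _ a_far); apply: (sub_le_big leqnn (fun m n => leq_addr n m)).
by have := f_dom v; lia.
Qed.

Lemma dominating_setT : dominating e [set: T].
Proof. by apply/forallP => v; apply/set0Pn; exists v; rewrite setIT setU11. Qed.

Lemma dominating_setD1 (D : {set T}) (x : T) :
  double_dominating e D -> dominating e (D :\ x).
Proof.
move/forallP => ddomD; apply/forallP => v.
rewrite setIDA -card_gt0; have := ddomD v; rewrite (cardsD1 x); lia.
Qed.

Lemma weight_le_double_card (f : {ffun T -> 'I_3}) : weight f <= 2 * #|T|.
Proof.
rewrite /weight mulnC -sum_nat_const.
by apply: leq_sum => v _; rewrite -ltnS ltn_ord.
Qed.

Lemma gamma_le_card (D : {set T}) : dominating e D -> gamma e <= #|D|.
Proof. exact: (bigmin_le_cond _ (fun D : {set T} => #|D|)). Qed.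

Lemma gamma_x2_le_card (D : {set T}) : double_dominating e D -> gamma_x2 e <= #|D|.
Proof. exact: (bigmin_le_cond _ (fun D : {set T} => #|D|)). Qed.

Lemma gamma210_le_weight (f : {ffun T -> 'I_3}) : is_210dom e f -> gamma210 e <= weight f.
Proof. exact: (bigmin_le_cond _ (@weight T)). Qed.

Lemma gamma_attained : exists2 D, dominating e D & gamma e = #|D|.
Proof.
have [D] := eq_bigmin _ _ (fun D : {set T} => #|D|) dominating_setT
  (fun D _ => max_card D).
by exists D.
Qed.

Lemma gamma210_attained : exists2 f, is_210dom e f & gamma210 e = weight f.
Proof.
have [f] := eq_bigmin _ _ (@weight T) (dominating_is_210dom dominating_setT)
  (fun f _ => weight_le_double_card f).
by exists f.
Qed.

Lemma gamma210_le_double_gamma : gamma210 e <= 2 * gamma e.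
Proof.
have [D domD ->] := gamma_attained.
rewrite -(weight_scaled_indicator (Ordinal (isT : 2 < 3))).
exact/gamma210_le_weight/dominating_is_210dom.
Qed.

Section NoIsolated.
Hypothesis noiso : no_isolated e.

Lemma double_dominating_setT : double_dominating e [set: T].
Proof.
apply/forallP => v; rewrite setIT /cnbh cardsU1 v_notin_nbh.
by have [u evu] := noiso v; rewrite add1n ltnS; apply/card_gt0P; exists u; rewrite inE.
Qed.

Lemma gamma_x2_attained : exists2 D, double_dominating e D & gamma_x2 e = #|D|.
Proof.
have [D] := eq_bigmin _ _ (fun D : {set T} => #|D|) double_dominating_setT
  (fun D _ => max_card D).
by exists D.
Qed.

Lemma gamma210_le_gamma_x2 : gamma210 e <= gamma_x2 e.
Proof.
have [D ddomD ->] := gamma_x2_attained.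
rewrite -[#|D|]mul1n -(weight_scaled_indicator (Ordinal (isT : 1 < 3))).
by rewrite gamma210_le_weight // is_210dom_indicator.
Qed.

Lemma gamma_lt_gamma_x2 : 0 < gamma_x2 e -> gamma e < gamma_x2 e.
Proof.
have [D ddomD ->] := gamma_x2_attained; case/card_gt0P => x xD.
rewrite (cardsD1 x D) xD add1n ltnS.
exact/gamma_le_card/dominating_setD1.
Qed.

End NoIsolated.

Lemma gamma_le1_or_gamma_x2_le_gamma210 :
  gamma210 e <= 3 -> gamma e <= 1 \/ gamma_x2 e <= gamma210 e.
Proof.
have [f f_dom ->] := gamma210_attained => w3.
have [[a fa2]|f_le1] : (exists a, f a = 2 :> nat) \/ (forall v, f v <= 1).
  case: (pickP (fun a => f a == 2 :> nat)) => [a /eqP fa2|no2]; first by left; exists a.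
  by right => v; have := no2 v; case: (f v) => [[|[|[|k]]] ?].
- by left; rewrite -(cards1 a) gamma_le_card // (dominating_set1 f_dom fa2 w3).
- right; rewrite (scaled_indicator_support f_le1) weight_scaled_indicator mul1n.
  by rewrite gamma_x2_le_card // -is_210dom_indicator -scaled_indicator_support.
Qed.

End Domination.

Theorem theorem37 (T : finType) (e : rel T)
  (e_sym : symmetric e) (e_irr : irreflexive e)
  (noiso : no_isolated e) :
  gamma210 e = 3 <-> (gamma_x2 e = (gamma e).+1 /\ (gamma e).+1 = 3).
Proof.
have le_2g := gamma210_le_double_gamma e_irr.
have le_gx2 := gamma210_le_gamma_x2 e_irr noiso.
have lt_gx2 := gamma_lt_gamma_x2 e_irr noiso.
have dichotomy := @gamma_le1_or_gamma_x2_le_gamma210 _ _ e_irr.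
lia.
Qed.
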